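(* For every subdistribution $\mu$ on $\Sigma$, state assertion $A$ and $p\in[0,1]$: $\mu\vDash(\mathbb{P}[A]=p)\oplus\top$ iff $\mathbb{P}_\mu[A]\ge p$, where $\mathbb{P}_\mu[A]=\sum\{\mu(\sigma):\sigma\in\mathsf{supp}(\mu),\ \sigma\vDash_\Sigma A\}$.
   Context: A subdistribution on a countable set $\Sigma$ is $\mu\colon\Sigma\to[0,1]$ with $|\mu|=\sum_\sigma\mu(\sigma)\le1$; $\mathsf{supp}(\mu)=\{\sigma:\mu(\sigma)>0\}$; $\mu_1+\mu_2$ is the pointwise sum, defined when $|\mu_1|+|\mu_2|\le1$. $\mu\vDash\mathbb{P}[A]=p$ iff $|\mu|=p$ and every $\sigma\in\mathsf{supp}(\mu)$ satisfies $A$; $\mu\vDash\top$ always; $\mu\vDash\varphi\oplus\psi$ iff $\mu=\mu_1+\mu_2$ with $\mu_1\vDash\varphi$, $\mu_2\vDash\psi$. *)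

From HB Require Import structures.
From mathcomp Require Import all_boot all_order all_algebra.
From mathcomp Require Import all_classical all_reals.
From mathcomp Require Import ereal esum.
Set Implicit Arguments. Unset Strict Implicit. Unset Printing Implicit Defensive.
Import Order.TTheory GRing.Theory Num.Theory.
Local Open Scope classical_set_scope.
Local Open Scope ring_scope.

Section Subdist.
Variables (R : realType) (Sigma : countType).

Definition mass (mu : Sigma -> R) : \bar R := \esum_(s in [set: Sigma]) (mu s)%:E.

Definition is_subdist (mu : Sigma -> R) : Prop :=
  (forall s, 0 <= mu s <= 1) /\ (mass mu <= 1%:E)%E.

Definition supp (mu : Sigma -> R) : set Sigma := [set s | 0 < mu s].

Definition probA (mu : Sigma -> R) (A : set Sigma) : \bar R :=
  \esum_(s in [set s | s \in supp mu /\ A s]) (mu s)%:E.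

Inductive assn : Type :=
| PrEq (A : set Sigma) (p : R)
| Top
| OPlus (phi psi : assn).

Fixpoint sat (mu : Sigma -> R) (phi : assn) : Prop :=
  match phi with
  | PrEq A p => mass mu = p%:E /\ supp mu `<=` A
  | Top => True
  | OPlus phi1 phi2 =>
      exists mu1 mu2 : Sigma -> R,
        is_subdist mu1 /\ is_subdist mu2 /\
        (mass mu1 + mass mu2 <= 1%:E)%E /\
        mu = (fun s => mu1 s + mu2 s) /\
        sat mu1 phi1 /\ sat mu2 phi2
  end.

End Subdist.

(* If mu = mu1 + mu2 with mu1 |= P[A] = p, then mu1 <= mu pointwise and mu1 lives on
   supp(mu) and on A, so p = |mu1| <= P_mu[A].  Conversely, if p <= q := P_mu[A], the
   restriction of mu to A scaled by p / q has mass p and support in A, and the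
   remainder is a subdistribution satisfying top. *)
From HB Require Import structures.
From mathcomp Require Import all_boot all_order all_algebra.
From mathcomp Require Import all_classical all_reals.
From mathcomp Require Import ereal esum.
Set Implicit Arguments. Unset Strict Implicit. Unset Printing Implicit Defensive.
Import Order.TTheory GRing.Theory Num.Theory.
Local Open Scope classical_set_scope.
Local Open Scope ring_scope.

Lemma esumZl (R : realType) (T : choiceType) (S : set T) (a : T -> \bar R) (r : R) :
  0 <= r -> (forall i, 0 <= a i)%E ->
  \esum_(i in S) (r%:E * a i)%E = (r%:E * \esum_(i in S) a i)%E.
Proof.
move=> r0 a0; rewrite /esum -ereal_supZl //; last first.
  by apply/set0P; exists 0%E; exists set0; [exact: fsets_set0|rewrite fsbig_set0].
congr ereal_sup; rewrite image_comp; apply: eq_imagel => X _ /=.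
by rewrite ge0_mule_fsumr.
Qed.

Lemma exists_ratio01 (F : numFieldType) (p q : F) :
  0 <= p <= q -> exists2 c, 0 <= c <= 1 & c * q = p.
Proof.
case/andP=> p0 pq; have [q0|q_neq0] := eqVneq q 0.
  by exists 0; rewrite ?lexx ?ler01 // mul0r; apply/eqP; rewrite eq_le p0 -q0 pq.
have q_gt0 : 0 < q by rewrite lt_def q_neq0 (le_trans p0).
by exists (p / q); rewrite ?mulfVK // divr_ge0 ?ler_pdivrMr ?mul1r ?(ltW q_gt0).
Qed.

Section Subdistributions.
Variables (R : realType) (Sigma : countType).
Implicit Types (mu nu : Sigma -> R) (A : set Sigma).

Lemma massD mu nu : (forall s, 0 <= mu s) -> (forall s, 0 <= nu s) ->
  mass (fun s => mu s + nu s) = (mass mu + mass nu)%E.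
Proof. by move=> mu0 nu0; rewrite /mass -esumD// => s _; rewrite lee_fin. Qed.

Lemma massZ (c : R) mu : 0 <= c -> (forall s, 0 <= mu s) ->
  mass (fun s => c * mu s) = (c%:E * mass mu)%E.
Proof. by move=> c0 mu0; rewrite /mass -esumZl// => s; rewrite lee_fin. Qed.

Lemma probA_mass mu A : (forall s, 0 <= mu s) ->
  probA mu A = mass (fun s => if s \in A then mu s else 0).
Proof.
move=> mu0; rewrite /probA esum_mkcond; apply: eq_esum => s _.
case: ifPn => [/set_mem[/set_mem mu_pos As] | /negP nS]; first by rewrite (mem_set As).
case: ifPn => // /set_mem As; congr (_%:E); apply/eqP.
rewrite eq_le mu0 /= leNgt; apply/negP => mu_pos.
by apply: nS; apply/mem_set; split=> //; exact: mem_set.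
Qed.

Lemma probA_fin_num mu A : is_subdist mu -> probA mu A \is a fin_num.
Proof.
move=> [mu01 mass_le1]; have mu0 s : 0 <= mu s by case/andP: (mu01 s).
have probA0 : (0 <= probA mu A)%E by apply: esum_ge0 => s _; rewrite lee_fin.
rewrite ge0_fin_numE // (le_lt_trans _ (ltry 1)) // (le_trans _ mass_le1) //.
by rewrite probA_mass //; apply: le_esum => s _; case: ifP; rewrite lee_fin.
Qed.

Lemma is_subdist_le mu nu : is_subdist mu -> (forall s, 0 <= nu s <= mu s) ->
  is_subdist nu.
Proof.
move=> [mu01 mass_le1] nu_le; split.
  move=> s; case/andP: (nu_le s) => -> /le_trans; apply.
  by case/andP: (mu01 s).
by apply: le_trans mass_le1; apply: le_esum => s _; case/andP: (nu_le s).
Qed.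

Lemma sat_OPlus_Top mu phi : is_subdist mu ->
  sat mu (OPlus phi (@Top R Sigma)) <->
  exists2 nu, (forall s, 0 <= nu s <= mu s) & sat nu phi.
Proof.
move=> mu_sub; split.
  move=> [mu1 [mu2 [[mu1_01 _] [[mu2_01 _] [_ [-> [sat1 _]]]]]]].
  exists mu1 => // s; case/andP: (mu1_01 s) => -> _ /=.
  by rewrite lerDl; case/andP: (mu2_01 s).
move=> [nu nu_le sat_nu]; pose rest s := mu s - nu s.
have rest_le s : 0 <= rest s <= mu s.
  by case/andP: (nu_le s) => nu0 nu_mu; rewrite subr_ge0 nu_mu gerBl.
have mu_split : mu = (fun s => nu s + rest s).
  by apply: funext => s; rewrite addrC subrK.
have mass_split : mass mu = (mass nu + mass rest)%E.
  rewrite {1}mu_split massD // => s; first by case/andP: (nu_le s).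
  by case/andP: (rest_le s).
have nu_sub := is_subdist_le mu_sub nu_le.
have rest_sub := is_subdist_le mu_sub rest_le.
exists nu, rest; rewrite -mass_split; do 2!split=> //.
by split; [case: mu_sub | split].
Qed.

Lemma mass_le_probA mu nu A : (forall s, 0 <= nu s <= mu s) -> supp nu `<=` A ->
  (mass nu <= probA mu A)%E.
Proof.
move=> nu_le nuA; have mu0 s : 0 <= mu s by case/andP: (nu_le s); exact: le_trans.
rewrite probA_mass //; apply: le_esum => s _; rewrite lee_fin.
case: ifPn => [_|/negP As]; first by case/andP: (nu_le s).
by rewrite leNgt; apply/negP => /nuA; rewrite -inE.
Qed.

Lemma exists_sub_mass mu A p q : (forall s, 0 <= mu s) ->
  probA mu A = q%:E -> 0 <= p <= q ->
  exists2 nu, (forall s, 0 <= nu s <= mu s) & sat nu (PrEq A p).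
Proof.
move=> mu0 probAE /exists_ratio01[c /andP[c0 c1] cq].
pose nu s := c * (if s \in A then mu s else 0).
exists nu.
  move=> s; rewrite /nu; case: ifP => _; last by rewrite mulr0 lexx mu0.
  by rewrite mulr_ge0 // ler_piMl.
split; last by move=> s; rewrite /supp /= /nu; case: ifPn => [/set_mem //|_]; rewrite mulr0 ltxx.
rewrite massZ //; last by move=> s; case: ifP.
by rewrite -probA_mass // probAE -EFinM cq.
Qed.

End Subdistributions.

Theorem lemmaB5 (R : realType) (Sigma : countType) (mu : Sigma -> R)
  (A : set Sigma) (p : R) :
  is_subdist mu -> 0 <= p <= 1 ->
  (sat mu (OPlus (PrEq A p) (@Top R Sigma)) <-> (p%:E <= probA mu A)%E).
Proof.
move=> mu_sub /andP[p0 _]; rewrite sat_OPlus_Top //; split.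
  by move=> [nu nu_le [<- nuA]]; exact: mass_le_probA.
have mu0 s : 0 <= mu s by case: mu_sub => /(_ s)/andP[].
have /fineK probAE : probA mu A \is a fin_num by exact: probA_fin_num.
rewrite -probAE lee_fin => p_le.
by apply: (exists_sub_mass mu0 (esym probAE)); rewrite p0 p_le.
Qed.
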